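(* Let $\hbar\neq0$ and let $B$ be an associative algebra containing (linearly) $\mathfrak h$ and elements $\xi_{i,r},x^\pm_{i,r}$ ($i\in I$, $r\in\mathbb N$) satisfying $\xi_{i,0}=d_i\alpha_i^\vee$. Then, in $B[u,v;u^{-1},v^{-1}]]$ (and, for (6), in the analogous ring of series in several variables), the relations (Y1), (Y2)–(Y3), (Y4), (Y5), (Y6) are respectively equivalent to: ($\mathcal Y$1) $[\xi_i(u),\xi_j(v)]=0$, $[\xi_i(u),h]=0$, $[h,h']=0$ for all $i,j\in I$, $h,h'\in\mathfrak h$; ($\mathcal Y$2) $[h,x_i^\pm(u)]=\pm\alpha_i(h)x_i^\pm(u)$, together with ($\mathcal Y$3) $(u-v\mp a)\xi_i(u)x_j^\pm(v)=(u-v\pm a)x_j^\pm(v)\xi_i(u)\mp2a\,x_j^\pm(u\mp a)\xi_i(u)$, where $a=\hbar d_ia_{ij}/2$; ($\mathcal Y$4) $(u-v\mp a)x_i^\pm(u)x_j^\pm(v)=(u-v\pm a)x_j^\pm(v)x_i^\pm(u)+\hbar\left([x^\pm_{i,0},x_j^\pm(v)]-[x_i^\pm(u),x^\pm_{j,0}]\right)$, $a=\hbar d_ia_{ij}/2$; ($\mathcal Y$5) $(u-v)[x_i^+(u),x_j^-(v)]=-\delta_{ij}\hbar(\xi_i(u)-\xi_i(v))$; ($\mathcal Y$6) for $i\ne j$ and $m=1-a_{ij}$: $\sum_{\pi\in S_m}[x_i^\pm(u_{\pi(1)}),[x_i^\pm(u_{\pi(2)}),[\cdots,[x_i^\pm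(u_{\pi(m)}),x_j^\pm(v)]\cdots]]]=0$.
   Context: $I$ finite, $(a_{ij})$ a symmetrisable generalized Cartan matrix with relatively prime positive symmetrising integers $d_i$ ($(d_ia_{ij})$ symmetric), $(\mathfrak h,\{\alpha_i\},\{\alpha_i^\vee\})$ its realization ($\alpha_j(\alpha_i^\vee)=a_{ij}$). The relations are: (Y1) all $\xi_{i,r}$ and all $h\in\mathfrak h$ pairwise commute; (Y2) $[h,x^\pm_{j,s}]=\pm\alpha_j(h)x^\pm_{j,s}$; (Y3) $[\xi_{i,r+1},x^\pm_{j,s}]-[\xi_{i,r},x^\pm_{j,s+1}]=\pm\frac{\hbar d_ia_{ij}}2(\xi_{i,r}x^\pm_{j,s}+x^\pm_{j,s}\xi_{i,r})$; (Y4) $[x^\pm_{i,r+1},x^\pm_{j,s}]-[x^\pm_{i,r},x^\pm_{j,s+1}]=\pm\frac{\hbar d_ia_{ij}}2(x^\pm_{i,r}x^\pm_{j,s}+x^\pm_{j,s}x^\pm_{i,r})$; (Y5) $[x^+_{i,r},x^-_{j,s}]=\delta_{ij}\xi_{i,r+s}$; (Y6) for $i\ne j$, $m=1-a_{ij}$, $r_1,\dots,r_m,s\in\mathbb N$: $\sum_{\pi\in S_m}[x^\pm_{i,r_{\pi(1)}},[x^\pm_{i,r_{\pi(2)}},[\cdots,[x^\pm_{i,r_{\pi(m)}},x^\pm_{j,s}]\cdots]]]=0$ (all for all $i,j\in I$, $r,s\in\mathbb N$, $h\in\mathfrak h$). Generating series: $\xi_i(u)=1+\hbar\sum_{r\ge0}\xi_{i,r}u^{-r-1}$,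 $x_i^\pm(u)=\hbar\sum_{r\ge0}x^\pm_{i,r}u^{-r-1}$; $x_j^\pm(u\mp a)$ means the expansion in $u^{-1}$. *)

From HB Require Import structures.
From mathcomp Require Import all_boot all_order all_algebra all_fingroup.
Set Implicit Arguments. Unset Strict Implicit. Unset Printing Implicit Defensive.
Import Order.TTheory GRing.Theory Num.Theory.
Local Open Scope ring_scope.

(*  ser B      : one-variable series  F(u) = \sum_k F k * u^{-k}              *)
(*  mser B N   : series in N variables u_0..u_{N-1} with only nonpositive     *)
(*               powers:  S = \sum_e S e * prod_k u_k^{-e k}                  *)
(*  lser B N   : arbitrary coefficient functions on Z^N (coefficient of       *)
(*               prod_k u_k^{e k}); contains B[u_k; u_k^{-1}]] and is a       *)
(*               module over polynomials in the u_k (lmulvar = mult. by u_k). *)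

Definition ser (B : Type) := nat -> B.
Definition mser (B : Type) (N : nat) := {ffun 'I_N -> nat} -> B.
Definition lser (B : Type) (N : nat) := {ffun 'I_N -> int} -> B.

Section Series.
Variable B : ringType.

Definition smul (F G : ser B) : ser B :=
  fun k => \sum_(l < k.+1) F l * G (k - l)%N.
Definition scst (b : B) : ser B := fun k => if k is 0%N then b else 0.

Variable N : nat.
Definition mmul (S T : mser B N) : mser B N :=
  fun e => \sum_(dd : {dffun forall k : 'I_N, 'I_(e k).+1})
              S [ffun k => nat_of_ord (dd k)] * T [ffun k => (e k - dd k)%N].
Definition mcomm (S T : mser B N) : mser B N := fun e => mmul S T e - mmul T S e.
Definition mnest (l : seq (mser B N)) (Y : mser B N) : mser B N :=
  foldr (fun X acc => mcomm X acc) Y l.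
Definition msingle (k : 'I_N) (F : ser B) : mser B N :=
  fun e => if [forall j, (j != k) ==> (e j == 0%N)] then F (e k) else 0.
Definition toL (S : mser B N) : lser B N :=
  fun e => if [forall k, e k <= 0] then S [ffun k => `|e k|%N] else 0.
Definition lmulvar (k : 'I_N) (L : lser B N) : lser B N :=
  fun e => L [ffun j => e j - (j == k)%:Z].
End Series.

Definition comm (B : ringType) (x y : B) := x * y - y * x.
Definition nest (B : ringType) (l : seq B) (y : B) :=
  foldr (fun x acc => comm x acc) y l.

Definition vu : 'I_2 := ord0.
Definition vv : 'I_2 := ord_max.

Section Shift.
Variables (K : fieldType) (B : algType K).
(* F(u - c), expanded in u^{-1}:  (u-c)^{-m} = \sum_k C(m+k-1,k) c^k u^{-m-k} *)
Definition sshift (c : K) (F : ser B) : ser B :=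
  fun k => \sum_(l < k.+1) (('C(k.-1, k - l))%:R * c ^+ (k - l)) *: F l.
Definition lin_uv (c : K) (L : lser B 2) : lser B 2 :=
  fun e => lmulvar vu L e - lmulvar vv L e + c *: L e.
End Shift.

Definition GCM (n : nat) (A : 'I_n -> 'I_n -> int) :=
  [/\ forall i, A i i = 2,
      forall i j, i != j -> A i j <= 0
    & forall i j, (A i j == 0) = (A j i == 0)].

Definition symmetrising (n : nat) (A : 'I_n -> 'I_n -> int) (d : 'I_n -> nat) :=
  [/\ forall i, (0 < d i)%N,
      forall i j, (d i)%:Z * A i j = (d j)%:Z * A j i
    & \big[gcdn/0%N]_i d i = 1%N].

Definition realization (K : fieldType) (hT : vectType K) (n : nat)
    (A : 'I_n -> 'I_n -> int) (alpha : 'I_n -> {linear hT -> K^o})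
    (alphav : 'I_n -> hT) :=
  [/\ forall i j, alpha j (alphav i) = (A i j)%:~R :> K,
      free [seq alphav i | i <- enum 'I_n],
      (forall c : 'I_n -> K,
          (forall h, \sum_i c i * (alpha i h : K) = 0) -> forall i, c i = 0)
    & \dim (fullv : {vspace hT}) =
        (2 * n - \rank (\matrix_(i, j) (A i j)%:~R : 'M[K]_n))%N].

Section Relations.
Variables (K : fieldType) (B : algType K) (hT : vectType K) (n : nat).
Variables (A : 'I_n -> 'I_n -> int) (d : 'I_n -> nat).
Variables (alpha : 'I_n -> {linear hT -> K^o}) (iota : {linear hT -> B}).
Variables (hbar : K) (xi xp xm : 'I_n -> nat -> B).

Definition xpm (s : bool) := if s then xp else xm.
Definition sgn (s : bool) : K := if s then 1 else -1.
Definition acoef (i j : 'I_n) : K := hbar * (d i)%:R * (A i j)%:~R / 2.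

(* generating series xi_i(u) = 1 + hbar \sum xi_{i,r} u^{-r-1},
   x_i^pm(u) = hbar \sum x^pm_{i,r} u^{-r-1} *)
Definition xis (i : 'I_n) : ser B :=
  fun k => if k is r.+1 then hbar *: xi i r else 1.
Definition xs (s : bool) (i : 'I_n) : ser B :=
  fun k => if k is r.+1 then hbar *: xpm s i r else 0.

Definition Y1 :=
  [/\ forall i j r t, comm (xi i r) (xi j t) = 0,
      forall i r h, comm (xi i r) (iota h) = 0
    & forall h h', comm (iota h) (iota h') = 0].
Definition Y2 :=
  forall s h j t, comm (iota h) (xpm s j t) = (sgn s * (alpha j h : K)) *: xpm s j t.
Definition Y3 :=
  forall s i j r t,
    comm (xi i r.+1) (xpm s j t) - comm (xi i r) (xpm s j t.+1)
    = (sgn s * acoef i j) *: (xi i r * xpm s j t + xpm s j t * xi i r).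
Definition Y4 :=
  forall s i j r t,
    comm (xpm s i r.+1) (xpm s j t) - comm (xpm s i r) (xpm s j t.+1)
    = (sgn s * acoef i j) *: (xpm s i r * xpm s j t + xpm s j t * xpm s i r).
Definition Y5 :=
  forall i j r t, comm (xp i r) (xm j t) = (i == j)%:R * xi i (r + t).
Definition Y6 :=
  forall s i j, i != j ->
    forall (r : 'I_`|1 - A i j|%N -> nat) (t : nat),
      \sum_(p : 'S_(`|1 - A i j|%N))
         nest [seq xpm s i (r (p k)) | k <- enum 'I_(`|1 - A i j|%N)] (xpm s j t)
      = 0.

Definition CY1 :=
  [/\ forall i j e, mcomm (msingle vu (xis i)) (msingle vv (xis j)) e = 0,
      forall i h k, smul (xis i) (scst (iota h)) k - smul (scst (iota h)) (xis i) k = 0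
    & forall h h', comm (iota h) (iota h') = 0].
Definition CY2 :=
  forall s h i k,
    smul (scst (iota h)) (xs s i) k - smul (xs s i) (scst (iota h)) k
    = (sgn s * (alpha i h : K)) *: xs s i k.
Definition CY3 :=
  forall s i j e,
    lin_uv (- (sgn s * acoef i j))
           (toL (mmul (msingle vu (xis i)) (msingle vv (xs s j)))) e
    = lin_uv (sgn s * acoef i j)
           (toL (mmul (msingle vv (xs s j)) (msingle vu (xis i)))) e
      - (2 * sgn s * acoef i j) *:
           toL (msingle vu (smul (sshift (sgn s * acoef i j) (xs s j)) (xis i))) e.
Definition CY4 :=
  forall s i j e,
    lin_uv (- (sgn s * acoef i j))
           (toL (mmul (msingle vu (xs s i)) (msingle vv (xs s j)))) e
    = lin_uv (sgn s * acoef i j)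
           (toL (mmul (msingle vv (xs s j)) (msingle vu (xs s i)))) e
      + hbar *: (toL (msingle vv (fun k => smul (scst (xpm s i 0)) (xs s j) k
                                          - smul (xs s j) (scst (xpm s i 0)) k)) e
                 - toL (msingle vu (fun k => smul (xs s i) (scst (xpm s j 0)) k
                                          - smul (scst (xpm s j 0)) (xs s i) k)) e).
Definition CY5 :=
  forall i j e,
    lmulvar vu (toL (mcomm (msingle vu (xs true i)) (msingle vv (xs false j)))) e
    - lmulvar vv (toL (mcomm (msingle vu (xs true i)) (msingle vv (xs false j)))) e
    = - ((i == j)%:R * hbar) *:
        (toL (msingle vu (xis i)) e - toL (msingle vv (xis i)) e).
(* variables u_1..u_m are u_0..u_{m-1}, and v is the last variable u_m *)
Definition CY6 :=
  forall s i j, i != j ->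
    forall e : {ffun 'I_(`|1 - A i j|%N).+1 -> nat},
      \sum_(p : 'S_(`|1 - A i j|%N))
         mnest [seq msingle (widen_ord (leqnSn _) (p k)) (xs s i)
               | k <- enum 'I_(`|1 - A i j|%N)]
               (msingle ord_max (xs s j)) e
      = 0.
End Relations.

From HB Require Import structures.
From mathcomp Require Import all_boot all_order all_algebra all_fingroup.
From mathcomp Require Import ring.
Import Order.TTheory GRing.Theory Num.Theory.
Local Open Scope ring_scope.
Set Implicit Arguments. Unset Strict Implicit. Unset Printing Implicit Defensive.

(* Each series identity amounts to the family of identities between its
   coefficients, and multiplication by u - v + c acts on coefficients as a
   finite difference.  Hence the coefficient of u^-(a+1) v^-(b+1) in (CY3),
   resp. (CY4), is hbar^2 times the instance (r, s) = (a, b) of (Y3), resp.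
   (Y4), while the coefficients of u^0 and of v^0 are boundary terms:
   in (CY4) they are exactly the terms hbar [x_{i,0}, x_j(v)] and
   hbar [x_i(u), x_{j,0}], and in (CY3) those of u^0 follow from (Y2) and
   xi_{i,0} = d_i alpha_i^vee.  The v^0-coefficients of (CY3) are forced by
   all the others: once the relation is known to have only a v^0-part,
   substituting v = u -+ a identifies it with -+2a x_j(u -+ a) xi_i(u).
   Likewise (CY5) is (Y5) for r = 0 together with the recursion
   [x+_{i,r+1}, x-_{j,s}] = [x+_{i,r}, x-_{j,s+1}], and (CY1), (CY2), (CY6)
   hold coefficientwise up to powers of hbar. *)

Section MultiSeries.
Variables (B : nzRingType) (N : nat).
Implicit Types (S T : mser B N) (e : {ffun 'I_N -> nat}).

Definition mser_indep (k : 'I_N) T := forall e, e k != 0%N -> T e = 0.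

Definition erase_vars e (ks : seq 'I_N) : {ffun 'I_N -> nat} :=
  [ffun j => if j \in ks then 0%N else e j].

Lemma msingleE (k : 'I_N) (F : ser B) e :
  (forall j, j != k -> e j = 0%N) -> msingle k F e = F (e k).
Proof.
move=> e0; rewrite /msingle; case: forallP => // [[]] j.
by apply/implyP => /e0 ->.
Qed.

Lemma msingle_indep (j k : 'I_N) (F : ser B) : j != k -> mser_indep j (msingle k F).
Proof.
move=> jk e ej; rewrite /msingle; case: forallP => // e0.
by move: (e0 j); rewrite jk /= (negbTE ej).
Qed.

Lemma mmul_msinglel (k : 'I_N) (F : ser B) T e :
  mser_indep k T -> mmul (msingle k F) T e = F (e k) * T (erase_vars e [:: k]).
Proof.
move=> iT; rewrite /mmul.
pose dd0 : {dffun forall j : 'I_N, 'I_(e j).+1} :=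
  [ffun j => if j == k then ord_max else ord0].
rewrite (bigD1 dd0) //= big1 ?addr0 => [|dd ndd].
  rewrite msingleE => [|j jk]; last by rewrite !ffunE (negbTE jk).
  rewrite !ffunE eqxx /=; congr (_ * T _); apply/ffunP => j; rewrite !ffunE inE.
  by case: (j == k); rewrite /= ?subnn ?subn0.
rewrite /msingle; case: forallP => [dd0_off|]; last by rewrite mul0r.
have ddk : nat_of_ord (dd k) != e k.
  apply: contra ndd => /eqP ddk; apply/eqP/ffunP => j; rewrite !ffunE.
  case: eqP => [->|/eqP jk]; apply/val_inj => //=.
  by have /implyP/(_ jk) := dd0_off j; rewrite ffunE => /eqP.
rewrite iT ?mulr0 // ffunE subn_eq0 -ltnNge ltn_neqAle ddk.
by rewrite -ltnS ltn_ord.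
Qed.

Lemma mmul_msingler (k : 'I_N) (F : ser B) T e :
  mser_indep k T -> mmul T (msingle k F) e = T (erase_vars e [:: k]) * F (e k).
Proof.
move=> iT; rewrite /mmul.
pose dd0 : {dffun forall j : 'I_N, 'I_(e j).+1} :=
  [ffun j => if j == k then ord0 else ord_max].
rewrite (bigD1 dd0) //= big1 ?addr0 => [|dd ndd].
  rewrite [msingle _ _ _]msingleE => [|j jk]; last by rewrite !ffunE (negbTE jk) /= subnn.
  rewrite !ffunE eqxx /= subn0; congr (T _ * _); apply/ffunP => j; rewrite !ffunE inE.
  by case: (j == k).
rewrite /msingle; case: forallP => [dd0_off|]; last by rewrite mulr0.
rewrite iT ?mul0r // ffunE; apply: contra ndd => ddk; apply/eqP/ffunP => j.
rewrite !ffunE; case: eqP => [->|/eqP jk]; apply/val_inj => //=; first exact/eqP.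
have /implyP/(_ jk) := dd0_off j; rewrite ffunE subn_eq0 => /= ejdd.
by apply/eqP; rewrite eqn_leq ejdd -ltnS ltn_ord.
Qed.

Lemma mmul_indep k S T : mser_indep k S -> mser_indep k T -> mser_indep k (mmul S T).
Proof.
move=> iS iT e ek; rewrite /mmul big1 // => dd _.
have [ddk|ddk] := eqVneq (nat_of_ord (dd k)) 0%N.
  by rewrite [T _]iT ?mulr0 // ffunE ddk subn0.
by rewrite iS ?mul0r // ffunE.
Qed.

Lemma mcomm_indep k S T : mser_indep k S -> mser_indep k T -> mser_indep k (mcomm S T).
Proof.
by move=> iS iT e ek; rewrite /mcomm (mmul_indep iS iT) // (mmul_indep iT iS) // subrr.
Qed.

Lemma mnest_indep k (l : seq 'I_N) (F : ser B) k0 G :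
  k != k0 -> k \notin l ->
  mser_indep k (mnest [seq msingle x F | x <- l] (msingle k0 G)).
Proof.
move=> kk0; elim: l => [|x l IHl] /=; first by move=> _; apply: msingle_indep.
rewrite inE negb_or => /andP[kx kl].
by apply: mcomm_indep; [apply: msingle_indep | apply: IHl].
Qed.

Lemma mnest_msingle (l : seq 'I_N) (F : ser B) (k0 : 'I_N) (G : ser B) e :
  uniq (k0 :: l) ->
  mnest [seq msingle x F | x <- l] (msingle k0 G) e
  = nest [seq F (e x) | x <- l] (msingle k0 G (erase_vars e l)).
Proof.
elim: l e => [|x l IHl] e /=.
  by move=> _; congr (msingle _ _ _); apply/ffunP => j; rewrite !ffunE.
rewrite !inE negb_or => /andP[/andP[k0x k0l] /andP[xl ul]].
have iN : mser_indep x (mnest [seq msingle y F | y <- l] (msingle k0 G)).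
  by apply: mnest_indep; rewrite // eq_sym.
rewrite /mcomm mmul_msinglel // mmul_msingler // IHl /= ?k0l //.
have -> : [seq F (erase_vars e [:: x] y) | y <- l] = [seq F (e y) | y <- l].
  apply/eq_in_map => y yl /=; rewrite ffunE inE.
  by case: eqP => // yx; move: xl; rewrite -yx yl.
have -> // : erase_vars (erase_vars e [:: x]) l = erase_vars e (x :: l).
by apply/ffunP => j; rewrite !ffunE !inE; case: (j == x); case: (_ \in _).
Qed.

End MultiSeries.

Lemma mnest_msingle_perm (B : nzRingType) (m : nat) (F G : ser B)
    (e : {ffun 'I_m.+1 -> nat}) (p : 'S_m) :
  mnest [seq msingle (widen_ord (leqnSn m) (p k)) F | k <- enum 'I_m]
        (msingle ord_max G) e
  = nest [seq F (e (widen_ord (leqnSn m) (p k))) | k <- enum 'I_m] (G (e ord_max)).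
Proof.
set w := widen_ord (leqnSn m); set ks := [seq w (p k) | k <- enum 'I_m].
have w_inj : injective w by move=> k k' /(congr1 val) kk'; apply: val_inj.
have ks_max : ord_max \notin ks.
  by apply/mapP => -[k _ /(congr1 val) /= km]; move: (ltn_ord (p k)); rewrite -km ltnn.
have uks : uniq (ord_max :: ks).
  by rewrite /= ks_max map_inj_uniq ?enum_uniq // => k k' /w_inj /perm_inj.
have -> : [seq msingle (w (p k)) F | k <- enum 'I_m] = [seq msingle x F | x <- ks].
  by rewrite /ks -map_comp.
rewrite mnest_msingle // -map_comp msingleE ?ffunE ?(negbTE ks_max) // => j jm; rewrite ffunE.
case: ifP => // /negP[]; apply/mapP.
have jm' : (j < m)%N.
  by move: (ltn_ord j); rewrite ltnS leq_eqVlt => /orP[/eqP jm'|//]; case/eqP: jm; apply/val_inj.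
by exists (p^-1 (Ordinal jm'))%g; rewrite ?mem_enum // permKV; apply/val_inj.
Qed.

Definition uvn (a b : nat) : {ffun 'I_2 -> nat} := [ffun k => if k == vu then a else b].
Definition uvz (p q : int) : {ffun 'I_2 -> int} := [ffun k => if k == vu then p else q].

Lemma ord2_neq_vu (j : 'I_2) : j != vu -> j = vv.
Proof. by case: j => [[|[|]]] // ? ?; apply/val_inj. Qed.

Lemma ord2_neq_vv (j : 'I_2) : j != vv -> j = vu.
Proof. by case: j => [[|[|]]] // ? ?; apply/val_inj. Qed.

Lemma uvn_eta (e : {ffun 'I_2 -> nat}) : e = uvn (e vu) (e vv).
Proof. by apply/ffunP => j; rewrite ffunE; case: eqP => [->|/eqP/ord2_neq_vu ->]. Qed.

Lemma uvz_eta (e : {ffun 'I_2 -> int}) : e = uvz (e vu) (e vv).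
Proof. by apply/ffunP => j; rewrite ffunE; case: eqP => [->|/eqP/ord2_neq_vu ->]. Qed.

Lemma uvn_u a b : uvn a b vu = a. Proof. by rewrite ffunE eqxx. Qed.
Lemma uvn_v a b : uvn a b vv = b. Proof. by rewrite ffunE. Qed.
Lemma uvz_u p q : uvz p q vu = p. Proof. by rewrite ffunE eqxx. Qed.
Lemma uvz_v p q : uvz p q vv = q. Proof. by rewrite ffunE. Qed.

(* Every exponent is in the nonpositive quadrant, on one of the two lines
   just above it, or has a coordinate large enough for all three points
   [e], [e - 1_u], [e - 1_v] to lie outside that quadrant. *)
Lemma uvz_cases (P : {ffun 'I_2 -> int} -> Prop) :
  (forall a b : nat, P (uvz (- a%:Z) (- b%:Z))) ->
  (forall b : nat, P (uvz 1 (- b%:Z))) ->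
  (forall a : nat, P (uvz (- a%:Z) 1)) ->
  (forall p q, (1 < p) || (1 < q) || (0 < p) && (0 < q) -> P (uvz p q)) ->
  forall e, P e.
Proof.
have int_cases (p : int) : (exists a : nat, p = - a%:Z) \/ p = 1 \/ 1 < p.
  case: p => [[|[|p]]|p]; [by left; exists 0%N | by right; left | by right; right |].
  by left; exists p.+1; rewrite NegzE.
move=> Pneg Pu Pv Pbig e; rewrite (uvz_eta e).
by case: (int_cases (e vu)) => [[a ->]|[->|hp]];
  case: (int_cases (e vv)) => [[b ->]|[->|hq]] //; apply: Pbig; rewrite ?hp ?hq ?orbT.
Qed.

Section TwoVariables.
Variable B : nzRingType.
Implicit Types (F G : ser B) (S : mser B 2) (L : lser B 2).

Lemma msingle_u F a b : msingle vu F (uvn a b) = if b == 0%N then F a else 0.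
Proof.
rewrite /msingle uvn_u; case: forallP => [e0|e0].
  by move: (e0 vv); rewrite uvn_v => /= /eqP ->.
case: eqP => // b0; case: e0 => j; apply/implyP => /ord2_neq_vu ->.
by rewrite uvn_v b0.
Qed.

Lemma msingle_v F a b : msingle vv F (uvn a b) = if a == 0%N then F b else 0.
Proof.
rewrite /msingle uvn_v; case: forallP => [e0|e0].
  by move: (e0 vu); rewrite uvn_u => /= /eqP ->.
case: eqP => // a0; case: e0 => j; apply/implyP => /ord2_neq_vv ->.
by rewrite uvn_u a0.
Qed.

Lemma mmul_uv F G a b : mmul (msingle vu F) (msingle vv G) (uvn a b) = F a * G b.
Proof.
rewrite mmul_msinglel; last exact: msingle_indep.
rewrite uvn_u msingleE ?ffunE // => j /ord2_neq_vv ->.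
by rewrite ffunE.
Qed.

Lemma mmul_vu F G a b : mmul (msingle vv G) (msingle vu F) (uvn a b) = G b * F a.
Proof.
rewrite mmul_msinglel; last exact: msingle_indep.
rewrite uvn_v msingleE ?ffunE // => j /ord2_neq_vu ->.
by rewrite ffunE.
Qed.

Lemma mcomm_uv F G a b :
  mcomm (msingle vu F) (msingle vv G) (uvn a b) = comm (F a) (G b).
Proof. by rewrite /mcomm mmul_uv mmul_vu. Qed.

Lemma toL_uvz S p q :
  toL S (uvz p q) = if (p <= 0) && (q <= 0) then S (uvn `|p|%N `|q|%N) else 0.
Proof.
rewrite /toL; case: forallP => [e0|e0].
  move: (e0 vu) (e0 vv); rewrite uvz_u uvz_v => -> ->; congr S.
  by apply/ffunP => j; rewrite !ffunE; case: eqP.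
case: ifP => // /andP[p0 q0]; case: e0 => j.
by case: (eqVneq j vu) => [->|/ord2_neq_vu ->]; rewrite ?uvz_u ?uvz_v.
Qed.

Lemma toL_neg S (a b : nat) : toL S (uvz (- a%:Z) (- b%:Z)) = S (uvn a b).
Proof. by rewrite toL_uvz !oppr_le0 /= !abszN !absz_nat. Qed.

Lemma toL_pos S p q : (0 < p) || (0 < q) -> toL S (uvz p q) = 0.
Proof. by rewrite toL_uvz !ltNge; case: (p <= 0); case: (q <= 0). Qed.

Lemma lmulvar_u L p q : lmulvar vu L (uvz p q) = L (uvz (p - 1) q).
Proof.
rewrite /lmulvar; congr L; apply/ffunP => j; rewrite !ffunE.
by case: j => [[|[|m]] hm] //=; rewrite subr0.
Qed.

Lemma lmulvar_v L p q : lmulvar vv L (uvz p q) = L (uvz p (q - 1)).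
Proof.
rewrite /lmulvar; congr L; apply/ffunP => j; rewrite !ffunE.
by case: j => [[|[|m]] hm] //=; rewrite subr0.
Qed.

End TwoVariables.

Section Commutators.
Variable B : nzRingType.
Implicit Types (x y : B) (l : seq B).

Lemma comm0l y : comm 0 y = 0. Proof. by rewrite /comm mul0r mulr0 subrr. Qed.
Lemma comm0r y : comm y 0 = 0. Proof. by rewrite /comm mul0r mulr0 subrr. Qed.
Lemma comm1l y : comm 1 y = 0. Proof. by rewrite /comm mul1r mulr1 subrr. Qed.
Lemma comm1r y : comm y 1 = 0. Proof. by rewrite /comm mul1r mulr1 subrr. Qed.

Lemma nest_mem0 l y : 0 \in l -> nest l y = 0.
Proof.
elim: l => [|x l IHl] //=; rewrite inE => /orP[/eqP <-|/IHl ->].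
  exact: comm0l.
exact: comm0r.
Qed.

Lemma nest0 l : nest l 0 = 0.
Proof. by elim: l => [|x l IHl] //=; rewrite IHl comm0r. Qed.

Lemma smul_scstr (F : ser B) y k : smul F (scst y) k = F k * y.
Proof.
rewrite /smul big_ord_recr /= subnn big1 ?add0r // => l _.
have : (k - l)%N != 0%N by rewrite subn_eq0 -ltnNge.
by rewrite /scst; case: (k - l)%N => [|?]; rewrite ?mulr0.
Qed.

Lemma smul_scstl (F : ser B) y k : smul (scst y) F k = y * F k.
Proof.
by rewrite /smul big_ord_recl /= subn0 big1 ?addr0 // => l _; rewrite /scst /= mul0r.
Qed.

End Commutators.

Section ScaledCommutators.
Variables (K : fieldType) (B : algType K).
Implicit Types (x y : B) (a b : K).

Lemma scalerI_eq0 a x : a != 0 -> a *: x = 0 -> x = 0.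
Proof. by move=> a0 /eqP; rewrite scaler_eq0 (negbTE a0) => /eqP. Qed.

Lemma mulZZ a b x y : (a *: x) * (b *: y) = (a * b) *: (x * y).
Proof. by rewrite -scalerAl -scalerAr scalerA. Qed.

Lemma commZZ a b x y : comm (a *: x) (b *: y) = (a * b) *: comm x y.
Proof. by rewrite /comm !mulZZ [b * a]mulrC -scalerBr. Qed.

Lemma commZl a x y : comm (a *: x) y = a *: comm x y.
Proof. by rewrite /comm -scalerAl -scalerAr -scalerBr. Qed.

Lemma commZr a x y : comm x (a *: y) = a *: comm x y.
Proof. by rewrite /comm -scalerAl -scalerAr -scalerBr. Qed.

Lemma nestZ a (l : seq B) y :
  nest [seq a *: x | x <- l] (a *: y) = a ^+ (size l).+1 *: nest l y.
Proof. by elim: l => [|x l IHl] /=; rewrite ?expr1 // IHl commZZ -exprS. Qed.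

End ScaledCommutators.

Section Exchange.
Variables (K : fieldType) (B : algType K).
Implicit Types (c : K) (F G : ser B) (S : mser B 2) (L : lser B 2).

Lemma lin_uv_neg c S (a b : nat) :
  lin_uv c (toL S) (uvz (- a%:Z) (- b%:Z)) =
  S (uvn a.+1 b) - S (uvn a b.+1) + c *: S (uvn a b).
Proof.
have negS (k : nat) : - k%:Z - 1 = - k.+1%:Z by rewrite -opprD -addn1 PoszD.
by rewrite /lin_uv lmulvar_u lmulvar_v !negS !toL_neg.
Qed.

Lemma lin_uv_1u c S (b : nat) : lin_uv c (toL S) (uvz 1 (- b%:Z)) = S (uvn 0 b).
Proof.
rewrite /lin_uv lmulvar_u lmulvar_v subrr -[0]oppr0 toL_neg.
by rewrite !toL_pos ?ltr01 // scaler0 subr0 addr0.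
Qed.

Lemma lin_uv_1v c S (a : nat) : lin_uv c (toL S) (uvz (- a%:Z) 1) = - S (uvn a 0).
Proof.
rewrite /lin_uv lmulvar_u lmulvar_v subrr -[0]oppr0 toL_neg.
by rewrite !toL_pos ?ltr01 ?orbT // scaler0 sub0r addr0.
Qed.

Lemma lin_uv_big c S p q :
  (1 < p) || (1 < q) || (0 < p) && (0 < q) -> lin_uv c (toL S) (uvz p q) = 0.
Proof.
case/orP=> [/orP[p1|q1]|/andP[p0 q0]];
  rewrite /lin_uv lmulvar_u lmulvar_v !toL_pos ?scaler0 ?subrr ?addr0 //
    ?subr_gt0 ?p1 ?q1 ?p0 ?q0 ?(lt_trans ltr01 p1) ?(lt_trans ltr01 q1) ?orbT //.
Qed.

Lemma lmulvar_toL_mcommP S T L :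
  (forall e, lmulvar vu (toL (mcomm S T)) e - lmulvar vv (toL (mcomm S T)) e = L e)
  <-> (forall e, lin_uv (- 0) (toL (mmul S T)) e = lin_uv 0 (toL (mmul T S)) e + L e).
Proof.
have toLB e : toL (mcomm S T) e = toL (mmul S T) e - toL (mmul T S) e.
  by rewrite /toL /mcomm; case: ifP; rewrite ?subrr.
have lin_uvB e : lmulvar vu (toL (mcomm S T)) e - lmulvar vv (toL (mcomm S T)) e
    = lin_uv (- 0) (toL (mmul S T)) e - lin_uv 0 (toL (mmul T S)) e.
  rewrite /lin_uv /lmulvar !toLB oppr0 !scale0r !addr0 !opprB addrACA [RHS]addrACA.
  by rewrite [- _ + _]addrC.
split=> rel e; last by rewrite lin_uvB rel addrC addKr.
by rewrite -(rel e) lin_uvB [RHS]addrC subrK.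
Qed.

Definition exchange_coef c F G (a b : nat) : B :=
  F a.+1 * G b - F a * G b.+1 - c *: (F a * G b)
  - (G b * F a.+1 - G b.+1 * F a + c *: (G b * F a)).

(* Coefficientwise form of (u - v - c) F(u) G(v) = (u - v + c) G(v) F(u) + L(u, v),
   for L supported on nonpositive exponents. *)
Lemma exchange_relationP c F G L :
  (forall y, comm (F 0%N) y = 0) -> G 0%N = 0 ->
  (forall p q, (0 < p) || (0 < q) -> L (uvz p q) = 0) ->
  (forall e, lin_uv (- c) (toL (mmul (msingle vu F) (msingle vv G))) e
             = lin_uv c (toL (mmul (msingle vv G) (msingle vu F))) e + L e)
  <-> forall a b, exchange_coef c F G a b = L (uvz (- a%:Z) (- b%:Z)).
Proof.
move=> F0 G0 L0; split=> [rel a b|coef].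
  have := rel (uvz (- a%:Z) (- b%:Z)); rewrite !lin_uv_neg !mmul_uv !mmul_vu.
  by rewrite scaleNr /exchange_coef => ->; rewrite addrC addKr.
apply: uvz_cases => [a b|b|a|p q pq].
- rewrite !lin_uv_neg !mmul_uv !mmul_vu scaleNr -coef /exchange_coef.
  by rewrite [RHS]addrC subrK.
- rewrite !lin_uv_1u mmul_uv mmul_vu L0 ?ltr01 // addr0.
  by apply/eqP; rewrite -subr_eq0 -/(comm _ _) F0.
- by rewrite !lin_uv_1v mmul_uv mmul_vu G0 mulr0 mul0r L0 ?ltr01 ?orbT // addr0.
- rewrite !lin_uv_big // L0 ?addr0 //.
  by case/orP: pq => [/orP[p1|q1]|/andP[->]] //;
    rewrite ?(lt_trans ltr01 p1) ?(lt_trans ltr01 q1) ?orbT.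
Qed.

Lemma exchange_coefE c F G a b :
  exchange_coef c F G a b
  = comm (F a.+1) (G b) - comm (F a) (G b.+1) - c *: (F a * G b + G b * F a).
Proof.
rewrite /exchange_coef /comm scalerDr !opprD !opprK !addrA.
rewrite [_ - c *: (F a * G b) - G b * F a.+1]addrAC.
by rewrite [_ - F a * G b.+1 - G b * F a.+1]addrAC [_ - c *: (F a * G b) + _]addrAC.
Qed.

Lemma exchange_coef_c0 F G a b :
  exchange_coef 0 F G a b = comm (F a.+1) (G b) - comm (F a) (G b.+1).
Proof. by rewrite exchange_coefE scale0r subr0. Qed.

Lemma exchange_coef_a0 c F G b : F 0%N = 0 -> G 0%N = 0 ->
  exchange_coef c F G 0 b = comm (F 1%N) (G b).
Proof.
by move=> F0 G0; rewrite exchange_coefE F0 comm0l mul0r mulr0 addr0 scaler0 !subr0.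
Qed.

Lemma exchange_coef_b0 c F G a : G 0%N = 0 ->
  exchange_coef c F G a 0 = - comm (F a) (G 1%N).
Proof.
by move=> G0; rewrite exchange_coefE G0 comm0r mul0r mulr0 addr0 scaler0 subr0 sub0r.
Qed.

Lemma exchange_coefSS c h F G (y x : nat -> B) :
  (forall a, F a.+1 = h *: y a) -> (forall b, G b.+1 = h *: x b) ->
  forall a b, exchange_coef c F G a.+1 b.+1 =
    (h * h) *: (comm (y a.+1) (x b) - comm (y a) (x b.+1)
                - c *: (y a * x b + x b * y a)).
Proof.
move=> Fy Gx a b; rewrite exchange_coefE !Fy !Gx !commZZ !mulZZ -scalerDr.
by rewrite scalerA [c * _]mulrC -[(h * h * c) *: _]scalerA !scalerBr.
Qed.

Lemma sshiftS c G m : G 0%N = 0 ->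
  sshift c (fun b => G b.+1) m = sshift c G m.+1 - c *: sshift c G m.
Proof.
move=> G0; rewrite /sshift; case: m => [|m].
  by rewrite !big_ord1 big_ord_recl big_ord1 /= G0 !scaler0 add0r subr0.
rewrite [X in _ = X - _]big_ord_recl [X in _ = _ - c *: X]big_ord_recl /= G0.
rewrite !scaler0 !add0r big_ord_recr [X in _ = X - _]big_ord_recr /= scaler_sumr.
rewrite /bump /= !subnn !bin0 addrAC; congr (_ + _).
rewrite -sumrB; apply: eq_bigr => l _ /=.
rewrite !add1n !subSS !subSn ?leq_ord // binS natrD mulrDl scalerDl.
by rewrite exprS scalerA mulrCA [X in _ + X *: _ - _]mulrCA addrK.
Qed.

Lemma sshift_cst c (E : ser B) m : (forall b, E b.+1 = 0) ->
  sshift c E m = if m == 0%N then E 0%N else 0.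
Proof.
move=> E0; rewrite /sshift big_ord_recl big1 ?addr0 => [|l _]; last by rewrite E0 scaler0.
case: m => [|m] /=; first by rewrite bin0 expr0 mulr1 scale1r.
by rewrite bin_small // mul0r scale0r.
Qed.

Lemma sshift_exchange_coef c F G a m :
  sshift c (exchange_coef c F G a) m =
  comm (F a.+1) (sshift c G m) - comm (F a) (sshift c (fun b => G b.+1) m)
  - c *: (F a * sshift c G m + sshift c G m * F a).
Proof.
rewrite /sshift /comm !mulr_sumr !mulr_suml -!sumrB -big_split /= scaler_sumr -sumrB.
apply: eq_bigr => l _; rewrite exchange_coefE /comm.
by rewrite !scalerBr !scalerDr -!scalerAl -!scalerAr !scalerA [c * _]mulrC.
Qed.

Lemma exchange_coef_b0_shift c F G : F 0%N = 1 -> G 0%N = 0 ->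
  (forall a b, exchange_coef c F G a b.+1 = 0) ->
  forall n, exchange_coef c F G n 0 = - (2 * c) *: smul (sshift c G) F n.
Proof.
move=> F0 G0 coefS n; set Gs := sshift c G.
have Gs0 : Gs 0%N = 0 by rewrite /Gs /sshift big_ord1 G0 scaler0.
have shift_coef m a : sshift c (exchange_coef c F G a) m =
    comm (F a.+1) (Gs m) - comm (F a) (Gs m.+1) - (2 * c) *: (Gs m * F a).
  rewrite sshift_exchange_coef sshiftS // -/Gs /comm mulrBr mulrBl -scalerAr -scalerAl.
  set P := F a * Gs m.+1; set Q := Gs m.+1 * F a; set X := F a * Gs m.
  rewrite mulr_natl mulr2n scalerDl scalerDr !opprD !opprK !addrA.
  by rewrite [_ - P + _ + Q]addrAC [_ + c *: X - _]addrAC addrK.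
(* Substitute v = u - c: the factor u - v - c vanishes, and by [coefS] only the
   v^0-part of the relation survives. *)
have -> : exchange_coef c F G n 0 =
    \sum_(m < n.+1) sshift c (exchange_coef c F G (n - m)) m.
  rewrite big_ord_recl /= sshift_cst // subn0 big1 ?addr0 // => m _.
  by rewrite sshift_cst.
under eq_bigr => m _ do rewrite shift_coef.
rewrite sumrB.
set telescoping := fun m => comm (F (n - m)%N.+1) (Gs m) - comm (F (n - m)%N) (Gs m.+1).
have -> : \sum_(m < n.+1) telescoping m = 0.
  rewrite -(big_mkord xpredT telescoping).
  rewrite (telescope_sumr_eq (fun k => - comm (F (n.+1 - k)%N) (Gs k))) //.
    by rewrite subnn F0 comm1l subn0 Gs0 comm0r subrr.
  by move=> k /andP[_ kn]; rewrite subSS subSn // opprK addrC.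
by rewrite sub0r /smul -scaler_sumr scaleNr.
Qed.

End Exchange.

Section Relations.
Variables (K : fieldType) (B : algType K) (hT : vectType K) (n : nat).
Variables (A : 'I_n -> 'I_n -> int) (d : 'I_n -> nat).
Variables (alpha : 'I_n -> {linear hT -> K^o}) (iota : {linear hT -> B}).
Variables (hbar : K) (xi xp xm : 'I_n -> nat -> B).
Hypothesis hbar0 : hbar != 0.

Local Notation xis := (xis hbar xi).
Local Notation xs := (xs hbar xp xm).
Local Notation x := (xpm xp xm).
Local Notation cc s i j := (sgn K s * acoef A d hbar i j).

Let hbar2_neq0 : hbar * hbar != 0. Proof. by rewrite mulf_neq0. Qed.
Let xisS i r : xis i r.+1 = hbar *: xi i r. Proof. by []. Qed.
Let xsS s i r : xs s i r.+1 = hbar *: x s i r. Proof. by []. Qed.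

Lemma Y1_iff_CY1 : Y1 iota xi <-> CY1 iota hbar xi.
Proof.
split=> [[xixi xih hh]|[cxixi cxih hh]]; split=> //.
- move=> i j e; rewrite (uvn_eta e) mcomm_uv.
  case: (e vu) => [|r]; first by rewrite comm1l.
  case: (e vv) => [|t]; first by rewrite comm1r.
  by rewrite commZZ xixi scaler0.
- move=> i h k; rewrite smul_scstr smul_scstl -/(comm _ _).
  by case: k => [|r]; rewrite ?comm1l // commZl xih scaler0.
- move=> i j r t; apply: (scalerI_eq0 hbar2_neq0); rewrite -commZZ.
  by have := cxixi i j (uvn r.+1 t.+1); rewrite mcomm_uv.
- move=> i r h; apply: (scalerI_eq0 hbar0); rewrite -commZl.
  by have := cxih i h r.+1; rewrite smul_scstr smul_scstl.
Qed.

Lemma Y2_iff_CY2 : Y2 alpha iota xp xm <-> CY2 alpha iota hbar xp xm.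
Proof.
split=> Y2 s h i k.
  rewrite smul_scstr smul_scstl -/(comm _ _).
  by case: k => [|r]; rewrite ?comm0r ?scaler0 // commZr Y2 !scalerA mulrC.
apply: (scalerI hbar0); have := Y2 s h i k.+1.
by rewrite smul_scstr smul_scstl -/(comm _ _) commZr => ->; rewrite !scalerA mulrC.
Qed.

Lemma CY3_coef : CY3 A d hbar xi xp xm <->
  forall s i j a b, exchange_coef (cc s i j) (xis i) (xs s j) a b
    = - ((2 * sgn K s * acoef A d hbar i j) *:
         (if b == 0%N then smul (sshift (cc s i j) (xs s j)) (xis i) a else 0)).
Proof.
pose L s i j e := - ((2 * sgn K s * acoef A d hbar i j) *:
    toL (msingle vu (smul (sshift (cc s i j) (xs s j)) (xis i))) e).
have L0 s i j p q : (0 < p) || (0 < q) -> L s i j (uvz p q) = 0.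
  by move=> pq; rewrite /L toL_pos // scaler0 oppr0.
have coefP s i j :=
  exchange_relationP (cc s i j) (F := xis i) (G := xs s j) (@comm1l _) erefl (L0 s i j).
split=> [rel s i j a b|coef s i j].
  by rewrite (proj1 (coefP s i j) (rel s i j)) /L toL_neg msingle_u.
by apply/coefP => a b; rewrite coef /L toL_neg msingle_u.
Qed.

Section CartanSubalgebra.
Variable alphav : 'I_n -> hT.
Hypothesis alpha_alphav : forall i j, alpha j (alphav i) = (A i j)%:~R :> K.
Hypothesis xi0 : forall i, xi i 0%N = (d i)%:R *: iota (alphav i).
Hypothesis two_neq0 : (2 : K) != 0.

Lemma exchange_coef_xis0 s i j t : Y2 alpha iota xp xm ->
  exchange_coef (cc s i j) (xis i) (xs s j) 0 t.+1 = 0.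
Proof.
move=> Y2; rewrite exchange_coefE /= comm1l subr0 mul1r mulr1 commZZ xi0 commZl Y2.
rewrite alpha_alphav -scalerDl !scalerA; apply/eqP; rewrite subr_eq0; apply/eqP.
by congr (_ *: _); rewrite /acoef; field.
Qed.

Lemma Y23_iff_CY23 : Y2 alpha iota xp xm /\ Y3 A d hbar xi xp xm <->
  CY2 alpha iota hbar xp xm /\ CY3 A d hbar xi xp xm.
Proof.
split=> [[Y2 Y3]|[/Y2_iff_CY2 Y2 CY3]]; split=> //; first exact/Y2_iff_CY2.
  apply/CY3_coef => s i j.
  have coefS a t : exchange_coef (cc s i j) (xis i) (xs s j) a t.+1 = 0.
    case: a => [|r]; first exact: exchange_coef_xis0.
    by rewrite (exchange_coefSS _ (xisS i) (xsS s j)) Y3 subrr scaler0.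
  move=> a [|t]; last by rewrite coefS scaler0 oppr0.
  by rewrite exchange_coef_b0_shift // -mulrA scaleNr.
move=> s i j r t; have := proj1 CY3_coef CY3 s i j r.+1 t.+1.
rewrite (exchange_coefSS _ (xisS i) (xsS s j)) scaler0 oppr0.
by move=> /(scalerI_eq0 hbar2_neq0)/eqP; rewrite subr_eq0 => /eqP.
Qed.

End CartanSubalgebra.

Lemma CY4_coef : CY4 A d hbar xp xm <->
  forall s i j a b, exchange_coef (cc s i j) (xs s i) (xs s j) a b
    = hbar *: ((if a == 0%N then comm (x s i 0) (xs s j b) else 0)
               - (if b == 0%N then comm (xs s i a) (x s j 0) else 0)).
Proof.
pose L s i j e := hbar *:
  (toL (msingle vv (fun k => smul (scst (x s i 0)) (xs s j) k
                             - smul (xs s j) (scst (x s i 0)) k)) e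
   - toL (msingle vu (fun k => smul (xs s i) (scst (x s j 0)) k
                             - smul (scst (x s j 0)) (xs s i) k)) e).
have L0 s i j p q : (0 < p) || (0 < q) -> L s i j (uvz p q) = 0.
  by move=> pq; rewrite /L !toL_pos // subrr scaler0.
have coefP s i j :=
  exchange_relationP (cc s i j) (F := xs s i) (G := xs s j) (@comm0l _) erefl (L0 s i j).
split=> [rel s i j a b|coef s i j].
  rewrite (proj1 (coefP s i j) (rel s i j)) /L !toL_neg msingle_u msingle_v.
  by rewrite !smul_scstl !smul_scstr.
apply/coefP => a b; rewrite coef /L !toL_neg msingle_u msingle_v.
by rewrite !smul_scstl !smul_scstr.
Qed.

Lemma Y4_iff_CY4 : Y4 A d hbar xp xm <-> CY4 A d hbar xp xm.
Proof.
split=> [Y4|/CY4_coef CY4 s i j r t].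
  apply/CY4_coef => s i j [|r] [|t] /=.
  - by rewrite exchange_coef_a0 // comm0l !comm0r subrr scaler0.
  - by rewrite exchange_coef_a0 // commZl subr0.
  - by rewrite exchange_coef_b0 // commZr sub0r scalerN.
  - by rewrite (exchange_coefSS _ (xsS s i) (xsS s j)) Y4 !subrr !scaler0.
have := CY4 s i j r.+1 t.+1; rewrite (exchange_coefSS _ (xsS s i) (xsS s j)) subrr scaler0.
by move=> /(scalerI_eq0 hbar2_neq0)/eqP; rewrite subr_eq0 => /eqP.
Qed.

Lemma CY5_coef : CY5 hbar xi xp xm <->
  forall i j a b, comm (xs true i a.+1) (xs false j b) - comm (xs true i a) (xs false j b.+1)
    = - ((i == j)%:R * hbar) *:
        ((if b == 0%N then xis i a else 0) - (if a == 0%N then xis i b else 0)).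
Proof.
pose L i j e := - ((i == j)%:R * hbar) *:
  (toL (msingle vu (xis i)) e - toL (msingle vv (xis i)) e).
have L0 i j p q : (0 < p) || (0 < q) -> L i j (uvz p q) = 0.
  by move=> pq; rewrite /L !toL_pos // subrr scaler0.
have coefP i j := iff_trans (lmulvar_toL_mcommP _ _ (L i j))
  (exchange_relationP 0 (F := xs true i) (G := xs false j) (@comm0l _) erefl (L0 i j)).
split=> [rel i j a b|coef i j].
  by rewrite -exchange_coef_c0 (proj1 (coefP i j) (rel i j)) /L !toL_neg msingle_u msingle_v.
by apply/coefP => a b; rewrite exchange_coef_c0 coef /L !toL_neg msingle_u msingle_v.
Qed.

Lemma Y5_iff_CY5 : Y5 xi xp xm <-> CY5 hbar xi xp xm.
Proof.
have natZ (k : nat) (y : B) : k%:R * y = k%:R *: y by rewrite mulr_natl scaler_nat.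
split=> [Y5|/CY5_coef CY5 i j r].
  apply/CY5_coef => i j [|r] [|t] /=.
  - by rewrite comm0l comm0r !subrr scaler0.
  - rewrite comm0l subr0 sub0r commZZ Y5 natZ add0n scalerN scaleNr opprK !scalerA.
    by congr (_ *: _); ring.
  - rewrite comm0r sub0r subr0 commZZ Y5 natZ addn0 !scalerA -scaleNr.
    by congr (_ *: _); ring.
  - by rewrite !commZZ !Y5 addnS addSn !subrr scaler0.
elim: r => [|r IHr] t.
  apply: (scalerI hbar2_neq0); have := CY5 i j 0%N t.+1.
  rewrite /= comm0l subr0 sub0r commZZ => ->; rewrite natZ scalerN scaleNr opprK !scalerA.
  by congr (_ *: _); ring.
have := CY5 i j r.+1 t.+1; rewrite /= !commZZ subrr scaler0 -scalerBr.
by move=> /(scalerI_eq0 hbar2_neq0)/eqP; rewrite subr_eq0 => /eqP ->; rewrite IHr addnS.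
Qed.

Lemma nest_xsS s i j (m : nat) (p : 'S_m) (r : 'I_m -> nat) t :
  nest [seq xs s i (r (p k)).+1 | k <- enum 'I_m] (xs s j t.+1)
  = hbar ^+ m.+1 *: nest [seq x s i (r (p k)) | k <- enum 'I_m] (x s j t).
Proof.
transitivity (nest [seq hbar *: y | y <- [seq x s i (r (p k)) | k <- enum 'I_m]]
                   (hbar *: x s j t)); first by congr nest; rewrite -[in RHS]map_comp.
by rewrite nestZ size_map size_enum_ord.
Qed.

Lemma Y6_iff_CY6 : Y6 A xp xm <-> CY6 A hbar xp xm.
Proof.
split=> [Y6 s i j ij e|CY6 s i j ij r t]; set m := `|1 - A i j|%N;
  set w := widen_ord (leqnSn m).
  under eq_bigr do rewrite mnest_msingle_perm -/w.
  have [/andP[/forallP epos emax]|] := boolP [&& [forall k, e (w k) != 0%N] & e ord_max != 0%N].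
    pose r k := (e (w k)).-1; pose t := (e ord_max).-1.
    have eS k : e (w k) = (r k).+1 by rewrite prednK // lt0n epos.
    have emaxS : e ord_max = t.+1 by rewrite prednK // lt0n.
    under eq_bigr do rewrite (eq_map (fun k => congr1 (xs s i) (eS (_ k)))) emaxS nest_xsS.
    by rewrite -scaler_sumr Y6 // scaler0.
  case/nandP=> [/forallPn[k /negPn/eqP ek]|/negPn/eqP emax]; apply: big1 => p _.
    by apply: nest_mem0; apply/mapP; exists (p^-1 k)%g; rewrite ?mem_enum ?permKV ?ek.
  by rewrite emax nest0.
pose e : {ffun 'I_m.+1 -> nat} :=
  [ffun l => if (insub (val l) : option 'I_m) is Some k then (r k).+1 else t.+1].
have ew k : e (w k) = (r k).+1 by rewrite ffunE /= (valK k).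
have emax : e ord_max = t.+1 by rewrite ffunE insubN // ltnn.
have := CY6 s i j ij e; under eq_bigr do rewrite mnest_msingle_perm -/w.
under eq_bigr do rewrite (eq_map (fun k => congr1 (xs s i) (ew (_ k)))) emax nest_xsS.
by rewrite -scaler_sumr => /(scalerI_eq0 (expf_neq0 _ hbar0)).
Qed.

End Relations.

Theorem proposition2p3 (K : fieldType) (B : algType K) (hT : vectType K) (n : nat)
    (A : 'I_n -> 'I_n -> int) (d : 'I_n -> nat)
    (alpha : 'I_n -> {linear hT -> K^o}) (alphav : 'I_n -> hT)
    (iota : {linear hT -> B}) (hbar : K) (xi xp xm : 'I_n -> nat -> B) :
  [pchar K] =i pred0 ->
  GCM A -> symmetrising A d -> realization A alpha alphav ->
  injective iota -> hbar != 0 ->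
  (forall i, xi i 0%N = (d i)%:R *: iota (alphav i)) ->
  [/\ Y1 iota xi <-> CY1 iota hbar xi,
      Y2 alpha iota xp xm /\ Y3 A d hbar xi xp xm <->
        CY2 alpha iota hbar xp xm /\ CY3 A d hbar xi xp xm,
      Y4 A d hbar xp xm <-> CY4 A d hbar xp xm,
      Y5 xi xp xm <-> CY5 hbar xi xp xm
    & Y6 A xp xm <-> CY6 A hbar xp xm].
Proof.
(* Only the pairing alpha_j(alpha_i^vee) = a_ij of the Cartan data is used. *)
move=> char0 _ _ [alpha_alphav _ _ _] _ hbar0 xi0.
have two_neq0 : (2 : K) != 0 by rewrite (proj1 (pcharf0P K) char0).
split.
- exact: Y1_iff_CY1.
- exact: Y23_iff_CY23 alpha_alphav xi0 two_neq0.
- exact: Y4_iff_CY4.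
- exact: Y5_iff_CY5.
- exact: Y6_iff_CY6.
Qed.
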